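(* Let $S$ be a finite set, let $\mathcal{I}\subseteq 2^S$ be a downset of $(2^S,\subseteq)$, and let $T$ be a witnessing tree showing $\mathcal{I}\in\bullet(\{2^X\mid X\subseteq S\})$. Then $\mathrm{mult}_T(2^X)=\hat\mu_{\mathcal{I}}(X)$ for every $X\subseteq S$.
   Context: Here $2^X=\{Y\subseteq S\mid Y\subseteq X\}$ is the principal downset generated by $X$. For $\mathcal{C}\subseteq 2^S$, the generalized Möbius function $\hat\mu_{\mathcal{C}}:2^S\to\mathbb{Z}$ is defined by top-down induction: $\hat\mu_{\mathcal{C}}(X)=[X\in\mathcal{C}]-\sum_{X\subsetneq X'\subseteq S}\hat\mu_{\mathcal{C}}(X')$ (indicator $[X\in\mathcal{C}]\in\{0,1\}$). For sets $A,B$, $A\,\dot\cup\,B=A\cup B$ is defined only when $A\cap B=\emptyset$, and $A\,\dot\setminus\,B=A\setminus B$ is defined only when $B\subseteq A$. For a finite family $\mathcal{G}$ of sets, $\bullet(\mathcal{G})$ is the smallest family containing $\emptyset$ and every member of $\mathcal{G}$ and closed under well-defined disjoint unions and subset complements. A witnessing tree of $X\in\bullet(\mathcal{G})$ is a rooted ordered tree whose leaves are labelled by $\emptyset$ or members of $\mathcal{G}$ and whose internal nodes are labelled $\dot\cup$ or $\dot\setminus$ ($\dot\setminus$-nodes binary), such that evaluating internal nodes as the corresponding operations on their children's values is always well defined and the root evaluates to $X$. The polarity of a leaf $\ell$ is $1$ if the root-to-$\ell$ path goes to the right child of a $\dot\setminus$-node an even number of times and $-1$ otherwise; $\mathrm{mult}_T(U)$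 is the sum of the polarities of the leaves of $T$ labelled $U$ (so it is $0$ if no leaf is labelled $U$). *)

From mathcomp Require Import all_boot all_order all_algebra.
Set Implicit Arguments. Unset Strict Implicit. Unset Printing Implicit Defensive.
Import GRing.Theory.
Local Open Scope ring_scope.

Section Defs.
Variable T : finType.
Notation fam := {set {set T}}.

Definition pdown (X : {set T}) : fam := powerset X.

(* Generalized Moebius function, top-down induction; [fuel] bounds the number
   of further proper-superset steps; #|~: X| steps always suffice. *)
Fixpoint gmu_aux (C : fam) (n : nat) (X : {set T}) : int :=
  (X \in C)%:Z -
  (if n is m.+1 then \sum_(Y : {set T} | X \proper Y) gmu_aux C m Y else 0).
Definition gmu (C : fam) (X : {set T}) : int := gmu_aux C #|~: X| X.

Definition downset (C : fam) : Prop :=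
  forall A B : {set T}, B \subset A -> A \in C -> B \in C.

(* Rooted ordered trees: leaves labelled by families, internal nodes
   disjoint union (any arity, ordered children) or subset complement (binary). *)
Inductive wtree :=
| WLeaf of fam
| WUnion of seq wtree
| WDiff of wtree & wtree.

Fixpoint weval (t : wtree) : option fam :=
  match t with
  | WLeaf U => Some U
  | WUnion ts =>
      (fix go (ts : seq wtree) : option fam :=
         match ts with
         | [::] => Some set0
         | t1 :: ts' =>
             match weval t1, go ts' with
             | Some A, Some B => if [disjoint A & B] then Some (A :|: B) else None
             | _, _ => None
             end
         end) ts
  | WDiff l r =>
      match weval l, weval r with
      | Some A, Some B => if B \subset A then Some (A :\: B) else None
      | _, _ => None
      end
  end.

(* leaves with label and parity of number of right-child-of-\setminus steps *)
Fixpoint wleaves (t : wtree) : seq (fam * bool) :=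
  match t with
  | WLeaf U => [:: (U, false)]
  | WUnion ts =>
      (fix go (ts : seq wtree) : seq (fam * bool) :=
         match ts with
         | [::] => [::]
         | t1 :: ts' => wleaves t1 ++ go ts'
         end) ts
  | WDiff l r => wleaves l ++ [seq (p.1, ~~ p.2) | p <- wleaves r]
  end.

Definition polarity (b : bool) : int := if b then -1 else 1.

Definition mult (t : wtree) (U : fam) : int :=
  \sum_(p <- wleaves t | p.1 == U) polarity p.2.

Definition leaves_in (G : {set fam}) (t : wtree) : bool :=
  all (fun p : fam * bool => (p.1 == set0) || (p.1 \in G)) (wleaves t).

Definition witnessing (G : {set fam}) (t : wtree) (X : fam) : Prop :=
  leaves_in G t /\ weval t = Some X.

Definition principal_downsets : {set fam} := [set pdown X | X : {set T}].

End Defs.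

(* Evaluating a witnessing tree is linear on indicator functions: for every
   Y, [Y \in I] is the sum over the leaves of polarity times [Y \in label].
   A leaf labelled 2^X contributes exactly when Y is a subset of X, so
   [Y \in I] = sum_{X ⊇ Y} mult_T(2^X).  The generalized Moebius function
   satisfies the same identity, and superset sums determine a function on
   2^S uniquely, by top-down induction. *)

From mathcomp Require Import all_boot all_order all_algebra.
Set Implicit Arguments. Unset Strict Implicit. Unset Printing Implicit Defensive.
Import GRing.Theory.
Local Open Scope ring_scope.

Section SupersetSums.
Variable T : finType.
Implicit Types (C : {set {set T}}) (X Y : {set T}).

Lemma card_setC_proper X Y : X \proper Y -> (#|~: Y| < #|~: X|)%N.
Proof. by move=> ltXY; apply: proper_card; rewrite properC. Qed.

Lemma no_proper_superset X Y : (#|~: X| <= 0)%N -> X \proper Y = false.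
Proof.
by move=> X_full; apply/negP => /card_setC_proper /leq_trans /(_ X_full).
Qed.

Lemma big_supersetD1 (V : nmodType) (F : {set T} -> V) X :
  \sum_(Y : {set T} | X \subset Y) F Y =
    F X + \sum_(Y : {set T} | X \proper Y) F Y.
Proof.
rewrite (bigD1 X) //=; congr (_ + _); apply: eq_bigl => Y.
by rewrite properEneq andbC [Y == X]eq_sym.
Qed.

Lemma eq_superset_sums (V : zmodType) (f g : {set T} -> V) :
  (forall X, \sum_(Y : {set T} | X \subset Y) f Y =
             \sum_(Y : {set T} | X \subset Y) g Y) ->
  f =1 g.
Proof.
move=> eq_sums X; elim: {X}_.+1 {-2}X (ltnSn #|~: X|) => // n IH X.
rewrite ltnS => leXn; have := eq_sums X.
rewrite !big_supersetD1 (eq_bigr g) => [/addIr // | Y /card_setC_proper ltYX].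
exact: IH (leq_trans ltYX leXn).
Qed.

Lemma gmu_aux_fuel C n k X :
  (#|~: X| <= n)%N -> (#|~: X| <= k)%N -> gmu_aux C n X = gmu_aux C k X.
Proof.
elim: n k X => [|n IH] [|k] X leXn leXk //=; congr (_ - _).
1,2: by rewrite big_pred0 // => Y; apply: no_proper_superset.
apply: eq_bigr => Y /card_setC_proper ltYX.
by apply: IH; rewrite -ltnS (leq_trans ltYX).
Qed.

Lemma gmuE C X :
  gmu C X = (X \in C)%:Z - \sum_(Y : {set T} | X \proper Y) gmu C Y.
Proof.
rewrite /gmu; case cardX: #|~: X| => [|m] /=; congr (_ - _).
  by rewrite big_pred0 // => Y; apply: no_proper_superset; rewrite cardX.
apply: eq_bigr => Y /card_setC_proper; rewrite cardX ltnS => leYm.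
exact: gmu_aux_fuel.
Qed.

Lemma sum_gmu_supersets C X :
  \sum_(Y : {set T} | X \subset Y) gmu C Y = (X \in C)%:Z.
Proof. by rewrite big_supersetD1 [gmu C X]gmuE subrK. Qed.

End SupersetSums.

Section WitnessingTrees.
Variable T : finType.
Implicit Types (A B F U : {set {set T}}) (X Y : {set T}) (t : wtree T)
  (ts : seq (wtree T)).

Definition wtree_nested_ind (P : wtree T -> Prop)
    (PLeaf : forall U, P (WLeaf U))
    (PUnion : forall ts, foldr (fun t all_P => P t /\ all_P) True ts ->
       P (WUnion ts))
    (PDiff : forall l r, P l -> P r -> P (WDiff l r)) : forall t, P t :=
  fix F t := match t with
  | WLeaf U => PLeaf U
  | WUnion ts => PUnion ts
      ((fix G ts : foldr (fun t all_P => P t /\ all_P) True ts :=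
          match ts with [::] => I | t1 :: ts' => conj (F t1) (G ts') end) ts)
  | WDiff l r => PDiff l r (F l) (F r)
  end.

Lemma weval_WUnion_cons t1 ts : weval (WUnion (t1 :: ts)) =
  match weval t1, weval (WUnion ts) with
  | Some A, Some B => if [disjoint A & B] then Some (A :|: B) else None
  | _, _ => None
  end.
Proof. by []. Qed.

Lemma wleaves_WUnion_cons t1 ts :
  wleaves (WUnion (t1 :: ts)) = wleaves t1 ++ wleaves (WUnion ts).
Proof. by []. Qed.

Lemma mem_setU_disjointZ A B Y : [disjoint A & B] ->
  (Y \in A :|: B)%:Z = (Y \in A)%:Z + (Y \in B)%:Z.
Proof.
move=> disjAB; rewrite inE.
by case: (boolP (Y \in A)) => [/(disjointFr disjAB) -> | _] /=.
Qed.

Lemma mem_setD_subZ A B Y : B \subset A ->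
  (Y \in A :\: B)%:Z = (Y \in A)%:Z - (Y \in B)%:Z.
Proof.
move=> subBA; rewrite inE.
by case: (boolP (Y \in B)) => [/(subsetP subBA) -> | _] /=; rewrite ?subr0.
Qed.

Definition signed_mem (s : seq ({set {set T}} * bool)) Y : int :=
  \sum_(p <- s) polarity p.2 * (Y \in p.1)%:Z.

Lemma signed_mem_flip s Y :
  signed_mem [seq (p.1, ~~ p.2) | p <- s] Y = - signed_mem s Y.
Proof.
rewrite /signed_mem big_map -sumrN; apply: eq_bigr => p _.
by case: p.2; rewrite /polarity /= ?mulN1r ?mul1r ?opprK.
Qed.

Lemma weval_signed_mem t F : weval t = Some F ->
  forall Y, (Y \in F)%:Z = signed_mem (wleaves t) Y.
Proof.
elim/wtree_nested_ind: t F => [U|ts IH|l r IHl IHr] F.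
- by case=> <- Y; rewrite /signed_mem big_seq1 mul1r.
- elim: ts IH F => [|t1 ts IHts] IH F.
    by case=> <- Y; rewrite /signed_mem big_nil inE.
  case: IH => IH1 IHts'; rewrite weval_WUnion_cons wleaves_WUnion_cons.
  case eval1: (weval t1) => [A|] //.
  case evalts: (weval (WUnion ts)) => [B|] //.
  case: ifP => // disjAB [<-] Y.
  rewrite mem_setU_disjointZ // (IH1 A) // (IHts IHts' B) //.
  by rewrite /signed_mem big_cat.
- rewrite /=; case evall: (weval l) => [A|] //.
  case evalr: (weval r) => [B|] //.
  case: ifP => // subBA [<-] Y.
  rewrite mem_setD_subZ // (IHl A) // (IHr B) // -signed_mem_flip.
  by rewrite /signed_mem big_cat.
Qed.

Lemma pdown_inj : injective (@pdown T).
Proof.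
move=> X1 X2 eqX12; apply/eqP; rewrite eqEsubset -!powersetE.
change ((X1 \in pdown X2) && (X2 \in pdown X1)).
by rewrite -eqX12 {2}eqX12 !powersetE !subxx.
Qed.

Lemma pdown_neq0 X : pdown X != set0.
Proof. by apply/set0Pn; exists set0; rewrite powersetE sub0set. Qed.

Lemma mem_leaf_label U Y : (U == set0) || (U \in principal_downsets T) ->
  (Y \in U)%:Z = \sum_(X : {set T} | Y \subset X) (U == pdown X)%:Z.
Proof.
case/orP => [/eqP -> | /imsetP [X0 _ ->]].
  by rewrite inE big1 // => X _; rewrite eq_sym (negbTE (pdown_neq0 X)).
rewrite powersetE (eq_bigr (fun X => (X == X0)%:Z)) => [|X _]; last first.
  by rewrite (inj_eq pdown_inj) eq_sym.
case: (boolP (Y \subset X0)) => [subYX0 | not_subYX0].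
  by rewrite (bigD1 X0) //= eqxx big1 ?addr0 // => X /andP [_ /negbTE ->].
rewrite big1 // => X subYX; case: eqP => // eqXX0.
by rewrite -eqXX0 subYX in not_subYX0.
Qed.

Lemma mem_witnessed_family t F Y :
  witnessing (principal_downsets T) t F ->
  (Y \in F)%:Z = \sum_(X : {set T} | Y \subset X) mult t (pdown X).
Proof.
move=> [leaves_t eval_t]; rewrite (weval_signed_mem eval_t) /signed_mem.
rewrite (eq_big_seq _ (fun p leaf_p =>
  congr1 _ (mem_leaf_label Y (allP leaves_t p leaf_p)))).
under eq_bigr do rewrite mulr_sumr.
rewrite exchange_big /=; apply: eq_bigr => X _.
rewrite /mult [RHS]big_mkcond /=; apply: eq_bigr => p _.
by case: (p.1 == pdown X); rewrite ?mulr1 ?mulr0.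
Qed.

End WitnessingTrees.

Theorem proposition5p8 (T : finType) (I : {set {set T}}) (t : wtree T) :
  downset I ->
  witnessing (principal_downsets T) t I ->
  forall X : {set T}, mult t (pdown X) = gmu I X.
Proof.
move=> _ witness_t.
apply: (@eq_superset_sums _ _ (fun X => mult t (pdown X))) => Y.
by rewrite sum_gmu_supersets (mem_witnessed_family Y witness_t).
Qed.
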